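(* Let $T$ be a binary search tree in the cursor model and consider any sequence of operations on $T$ consisting of $M$ cursor moves and $R$ rotations. Then there is a binary search tree $T'$, whose keys are those of $T$ together with two extra keys $\min$ and $\max$ (respectively smaller and larger than all keys of $T$), and a restricted sequence of operations on $T'$ consisting of $4M+3R$ cursor moves and $2M+R$ rotations, which simulates the sequence on $T$, i.e., the sequence of nodes visited by the cursor of $T$ is a subsequence of the sequence of nodes visited by the cursor of $T'$.
   Context: Cursor model of binary search trees: besides the tree there is a cursor located at a node (initially the root). The allowed operations are: compare the key at the cursor with the searched value; move the cursor to an adjacent node (left child, right child or parent); rotate the node at the cursor upwards (a single rotation, which makes the node the parent of its former parent while preserving the in-order key order). A sequence of operations on a tree is called restricted if (i) every node visited by the cursor or involved in a rotation has depth less than $3$ (depth = distance to the root, the root having depth $0$), and (ii) after every rotation the cursor moves back to the root. *)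

From mathcomp Require Import all_boot all_order all_algebra.
Set Implicit Arguments. Unset Strict Implicit. Unset Printing Implicit Defensive.
Import Order.TTheory GRing.Theory Num.Theory.

Inductive tree := Leaf | Node of tree & int & tree.

Fixpoint inorder (t : tree) : seq int :=
  match t with Leaf => [::] | Node l k r => inorder l ++ k :: inorder r end.

Definition is_bst (t : tree) : bool := sorted (fun x y : int => (x < y)%R) (inorder t).

(* Zipper representation of a tree with a cursor: the focused subtree
   (whose root is the node at the cursor) and the path back to the root. *)
Inductive frame :=
  | FL of int & tree   (* focus is the left child of a node with key k and right subtree r *)
  | FR of tree & int.  (* focus is the right child of a node with left subtree l and key k *)

Definition cursor := (tree * seq frame)%type.

Definition init (t : tree) : cursor := (t, [::]).

Definition depth (c : cursor) : nat := size c.2.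

Definition cursor_key (c : cursor) : option int :=
  if c.1 is Node _ k _ then Some k else None.

Inductive op := MoveL | MoveR | MoveUp | Rot.

Definition is_move (o : op) : bool := if o is Rot then false else true.
Definition is_rot (o : op) : bool := if o is Rot then true else false.
Definition is_up (o : op) : bool := if o is MoveUp then true else false.

Definition plug (t : tree) (f : frame) : tree :=
  match f with FL k r => Node t k r | FR l k => Node l k t end.

(* one operation; None if it is not applicable.  After a rotation the cursor
   stays on the rotated node (which is now at its former parent's position). *)
Definition step (c : cursor) (o : op) : option cursor :=
  match o, c with
  | MoveL, (Node (Node _ _ _ as l) k r, ctx) => Some (l, FL k r :: ctx)
  | MoveR, (Node l k (Node _ _ _ as r), ctx) => Some (r, FR l k :: ctx)
  | MoveUp, (t, f :: ctx) => Some (plug t f, ctx)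
  | Rot, (Node a x b, FL p c :: ctx) => Some (Node a x (Node b p c), ctx)
  | Rot, (Node a x b, FR c p :: ctx) => Some (Node (Node c p a) x b, ctx)
  | _, _ => None
  end.

Fixpoint run (c : cursor) (s : seq op) : option (seq cursor) :=
  match s with
  | [::] => Some [::]
  | o :: s' =>
      match step c o with
      | Some c' => omap (cons c') (run c' s')
      | None => None
      end
  end.

(* nodes (identified by their keys) visited by the cursor: the initial node,
   then the node reached after each cursor move *)
Definition visited (c0 : cursor) (ops : seq op) (sts : seq cursor) : seq (option int) :=
  cursor_key c0 :: map (fun p => cursor_key p.2) (filter (fun p => is_move p.1) (zip ops sts)).

(* restricted run: (i) every cursor position (hence every node visited and every
   node involved in a rotation, namely the cursor node and its parent) has depth < 3;
   (ii) after every rotation the cursor moves (by parent moves) back to the root. *)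
Definition restricted (c0 : cursor) (ops : seq op) (sts : seq cursor) : Prop :=
  all (fun c => depth c < 3) (c0 :: sts) /\
  forall i, i < size ops -> is_rot (nth MoveUp ops i) ->
    exists j, [/\ i <= j < size ops, depth (nth c0 sts j) = 0 &
      forall k, i < k <= j -> is_up (nth Rot ops k)].

(** The simulating tree is always the original tree "re-rooted" at the cursor
    node x: the root of T' is x, its left child is the nearest ancestor of x
    whose key is smaller than x (or the sentinel min), its right child the
    nearest ancestor with a larger key (or max), and the remaining keys hang
    below these two nodes.  Each operation on T changes this shape only within
    depth 2, so it is replayed by a fixed block of operations near the root of
    T': a cursor move by four moves and two rotations, a rotation by three
    moves and one rotation, every block ending with the cursor at the root. *)

From mathcomp Require Import all_boot all_order all_algebra.
From mathcomp Require Import zify.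
Set Implicit Arguments. Unset Strict Implicit. Unset Printing Implicit Defensive.
Import Order.TTheory.

Section Reroot.
Variables mn mx : int.

(* [lower_tree ctx] holds the keys outside the cursor subtree that are smaller
   than it, except the largest of them, [lower_key ctx] (the sentinel [mn] when
   there is none); symmetrically for [upper_*]. *)
Fixpoint lower_key (ctx : seq frame) : int :=
  match ctx with [::] => mn | FR _ k :: _ => k | FL _ _ :: ctx' => lower_key ctx' end.

Fixpoint lower_tree (ctx : seq frame) : tree :=
  match ctx with
  | [::] => Leaf
  | FR l _ :: ctx' => Node (lower_tree ctx') (lower_key ctx') l
  | FL _ _ :: ctx' => lower_tree ctx'
  end.

Fixpoint upper_key (ctx : seq frame) : int :=
  match ctx with [::] => mx | FL k _ :: _ => k | FR _ _ :: ctx' => upper_key ctx' end.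

Fixpoint upper_tree (ctx : seq frame) : tree :=
  match ctx with
  | [::] => Leaf
  | FL _ r :: ctx' => Node r (upper_key ctx') (upper_tree ctx')
  | FR _ _ :: ctx' => upper_tree ctx'
  end.

Definition reroot (c : cursor) : tree :=
  if c.1 is Node l x r then
    Node (Node (lower_tree c.2) (lower_key c.2) l) x
         (Node r (upper_key c.2) (upper_tree c.2))
  else Leaf.

End Reroot.

Definition focused (c : cursor) : bool := if c.1 is Node _ _ _ then true else false.

Lemma step_focused c o c' : step c o = Some c' -> focused c'.
Proof.
case: c => t ctx; case: o => /=.
- by case: t => // -[|? ? ?] // ? ? [<-].
- by case: t => // ? ? [|? ? ?] // [<-].
- by case: ctx => // -[] ? ? ? [<-].
- by case: t ctx => // ? ? ? [|[] ? ? ?] // [<-].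
Qed.

Lemma run_cat c ops1 ops2 sts1 sts2 :
  run c ops1 = Some sts1 -> run (last c sts1) ops2 = Some sts2 ->
  run c (ops1 ++ ops2) = Some (sts1 ++ sts2).
Proof.
elim: ops1 c sts1 => [|o ops1 IH] c sts1 /=; first by case=> <-.
case: (step c o) => // c'; case E: (run c' ops1) => [sts1'|] //= [<-] /= H.
by rewrite (IH _ _ E H).
Qed.

Inductive restricted_steps : seq op -> seq cursor -> Prop :=
| RestrictedNil : restricted_steps [::] [::]
| RestrictedMove o c ops sts : is_move o -> depth c < 3 ->
    restricted_steps ops sts -> restricted_steps (o :: ops) (c :: sts)
| RestrictedRotRoot c ops sts : depth c = 0 ->
    restricted_steps ops sts -> restricted_steps (Rot :: ops) (c :: sts)
| RestrictedRotUp c1 c2 ops sts : depth c1 < 3 -> depth c2 = 0 ->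
    restricted_steps ops sts ->
    restricted_steps (Rot :: MoveUp :: ops) (c1 :: c2 :: sts).

Lemma restricted_steps_cat ops1 sts1 ops2 sts2 :
  restricted_steps ops1 sts1 -> restricted_steps ops2 sts2 ->
  restricted_steps (ops1 ++ ops2) (sts1 ++ sts2).
Proof. by elim=> //= *; constructor; auto. Qed.

Lemma restricted_steps_size ops sts : restricted_steps ops sts -> size ops = size sts.
Proof. by elim=> //= *; congr _.+1 => //; congr _.+1. Qed.

Definition returns_to_root (c0 : cursor) (ops : seq op) (sts : seq cursor) (i : nat) : Prop :=
  exists j,
  [/\ i <= j < size ops, depth (nth c0 sts j) = 0 &
      forall k, i < k <= j -> is_up (nth Rot ops k)].

Lemma returns_to_root_cons c0 o c ops sts i :
  returns_to_root c0 ops sts i -> returns_to_root c0 (o :: ops) (c :: sts) i.+1.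
Proof. by move=> [j [? ? up]]; exists j.+1; split=> // -[|k] //; apply: up. Qed.

Lemma restricted_steps_depth ops sts :
  restricted_steps ops sts -> all (fun c => depth c < 3) sts.
Proof. by elim=> //= > => [_ -> _ -> | -> _ -> | -> -> _ ->]. Qed.

Lemma restricted_steps_return c0 ops sts i :
  restricted_steps ops sts -> i < size ops -> is_rot (nth MoveUp ops i) ->
  returns_to_root c0 ops sts i.
Proof.
move=> restr; elim: restr i => {ops sts}
  [|o c ops sts oP _ _ IH|c ops sts cP _ IH|c1 c2 ops sts _ c2P _ IH] i //=.
- case: i => [|i Hi Hrot]; first by case: o oP.
  exact/returns_to_root_cons/IH.
- case: i => [_ _|i Hi Hrot]; first by exists 0; split=> // -[].
  exact/returns_to_root_cons/IH.
- case: i => [_ _|[|i] // Hi Hrot]; first by exists 1; split=> // -[|[|]].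
  exact/returns_to_root_cons/returns_to_root_cons/IH.
Qed.

Lemma restricted_stepsP c0 ops sts :
  depth c0 < 3 -> restricted_steps ops sts -> restricted c0 ops sts.
Proof.
move=> c0P restr; split; first by rewrite /= c0P (restricted_steps_depth restr).
by move=> i; apply: restricted_steps_return.
Qed.

Definition moved_to (ops : seq op) (sts : seq cursor) : seq (option int) :=
  map (fun p => cursor_key p.2) (filter (fun p => is_move p.1) (zip ops sts)).

Lemma moved_to_cat ops1 sts1 ops2 sts2 : size ops1 = size sts1 ->
  moved_to (ops1 ++ ops2) (sts1 ++ sts2) = moved_to ops1 sts1 ++ moved_to ops2 sts2.
Proof. by move=> eq_size; rewrite /moved_to zip_cat // filter_cat map_cat. Qed.

Lemma moved_to_move o c : is_move o -> moved_to [:: o] [:: c] = [:: cursor_key c].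
Proof. by case: o. Qed.

Definition simulates (mn mx : int) (c : cursor) (ops : seq op) (sts : seq cursor) : Prop :=
  exists ops' sts', [/\ run (reroot mn mx c, [::]) ops' = Some sts',
    last (reroot mn mx c, [::]) sts' = (reroot mn mx (last c sts), [::]),
    restricted_steps ops' sts',
    (count is_move ops', count is_rot ops') =
      (4 * count is_move ops + 3 * count is_rot ops,
       2 * count is_move ops + count is_rot ops) &
    subseq (moved_to ops sts) (moved_to ops' sts')].

Section Simulation.
Variables mn mx : int.

Lemma simulates_nil c : simulates mn mx c [::] [::].
Proof. by exists [::], [::]; split=> //; constructor. Qed.

Lemma simulates_cat c ops1 sts1 ops2 sts2 :
  size ops1 = size sts1 ->
  simulates mn mx c ops1 sts1 -> simulates mn mx (last c sts1) ops2 sts2 ->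
  simulates mn mx c (ops1 ++ ops2) (sts1 ++ sts2).
Proof.
move=> eq_size [ops1' [sts1' [run1 last1 restr1 [cm1 cr1] sub1]]].
move=> [ops2' [sts2' [run2 last2 restr2 [cm2 cr2] sub2]]].
exists (ops1' ++ ops2'), (sts1' ++ sts2'); split.
- by apply: run_cat run1 _; rewrite last1.
- by rewrite !last_cat last1.
- exact: restricted_steps_cat.
- by rewrite !count_cat cm1 cr1 cm2 cr2; congr pair; lia.
- rewrite !moved_to_cat //; last exact: restricted_steps_size.
  exact: cat_subseq.
Qed.

Lemma simulates_step c o c' :
  focused c -> step c o = Some c' -> simulates mn mx c [:: o] [:: c'].
Proof.
case: c => -[|l x r] ctx //= _.
case: o => /=;
  [ case: l => [|l1 y l2] // [<-]; exists [:: MoveL; MoveR; Rot; MoveUp; MoveL; Rot]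
  | case: r => [|r1 y r2] // [<-]; exists [:: MoveR; MoveL; Rot; MoveUp; MoveR; Rot]
  | case: ctx => [|[p r'|l' p] ctx] // [<-];
      [ exists [:: MoveR; Rot; MoveL; MoveL; Rot; MoveUp]
      | exists [:: MoveL; Rot; MoveR; MoveR; Rot; MoveUp] ]
  | case: ctx => [|[p r'|l' p] ctx] // [<-];
      [ exists [:: MoveR; MoveR; Rot; MoveUp] | exists [:: MoveL; MoveL; Rot; MoveUp] ] ].
all: eexists; split=> //; first by do ![constructor].
all: by rewrite moved_to_move // sub1seq /moved_to /= !inE eqxx !orbT.
Qed.

Lemma simulates_run c ops sts :
  focused c -> run c ops = Some sts -> simulates mn mx c ops sts.
Proof.
elim: ops c sts => [|o ops IH] c sts cP /=; first by case=> <-; exact: simulates_nil.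
case E: (step c o) => [c'|] //; case: (run c' ops) (IH c') => [sts'|] //= IHc' [<-].
apply: (@simulates_cat _ [:: o] [:: c']) => //; first exact: simulates_step.
exact: IHc' _ (step_focused E) erefl.
Qed.

End Simulation.

Lemma sorted_between (T : eqType) (e : rel T) (a b : T) (s : seq T) :
  transitive e -> sorted e s -> {in s, forall k, e a k && e k b} -> e a b ->
  sorted e (a :: rcons s b).
Proof.
move=> e_trans sorted_s s_between ab /=.
rewrite rcons_path (path_sortedE e_trans) sorted_s andbT; apply/andP; split.
  by apply/allP=> k /s_between /andP[].
by have := mem_last a s; rewrite inE => /predU1P[-> | /s_between /andP[]].
Qed.

Lemma int_seq_bounded (s : seq int) : exists b : int, {in s, forall k, - b < k < b}%R.
Proof.
elim: s => [|a s [b Hb]]; first by exists 0%R.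
exists (`|b| + `|a| + 1)%R => k; rewrite inE => /predU1P[-> | /Hb]; lia.
Qed.

Lemma inorder_reroot_init mn mx l x r :
  inorder (reroot mn mx (init (Node l x r))) = mn :: rcons (inorder (Node l x r)) mx.
Proof. by rewrite /= -cats1 -catA. Qed.

Theorem lemma4p3 (T : tree) (ops : seq op) (sts : seq cursor) (M R : nat) :
  T <> Leaf -> is_bst T ->
  run (init T) ops = Some sts ->
  count is_move ops = M -> count is_rot ops = R ->
  exists (T' : tree) (mn mx : int) (ops' : seq op) (sts' : seq cursor),
    is_bst T' /\
        (forall k, k \in inorder T -> (mn < k)%R /\ (k < mx)%R) /\
        inorder T' =i mn :: mx :: inorder T /\
        run (init T') ops' = Some sts' /\
        restricted (init T') ops' sts' /\
        count is_move ops' = 4 * M + 3 * R /\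
        count is_rot ops' = 2 * M + R /\
        subseq (visited (init T) ops sts) (visited (init T') ops' sts').
Proof.
case: T => // l x r _; set T := Node l x r => T_bst T_run <- <-.
have [b b_bounds] := int_seq_bounded (inorder T).
have T_focused : focused (init T) by [].
have [ops' [sts' [run' _ restr' [cm cr] sub']]] := simulates_run (- b) b T_focused T_run.
have T'_inorder := inorder_reroot_init (- b) b l x r.
have x_in : x \in inorder T by rewrite mem_cat mem_head orbT.
exists (reroot (- b) b (init T)), (- b)%R, b, ops', sts'; split.
  rewrite /is_bst T'_inorder; apply: sorted_between => //; first exact: lt_trans.
  by have /andP[lt_bx lt_xb] := b_bounds x x_in; apply: lt_trans lt_xb.
split; first by move=> k /b_bounds /andP[].
split; first by move=> k; rewrite T'_inorder in_cons mem_rcons.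
split; first exact: run'.
split; first exact: restricted_stepsP.
by rewrite cm cr /visited /= eqxx.
Qed.
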